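(* Let $\theta,\eta\in(0,\tfrac{\pi}{4}]$ with $\theta\le\eta$, and let the qubits $A,C_1,C_2,B$ be in the state $|\Phi_\theta\rangle_{AC_1}\otimes|\Phi_\eta\rangle_{C_2B}$. Let $\{P_k\}_{k=1}^4$, $P_k=|\varphi_k\rangle\langle\varphi_k|$, be a projective measurement on $C_1C_2\cong\mathbb{C}^2\otimes\mathbb{C}^2$ with rank-one projectors. For each outcome $k$ with probability $p_k>0$, let $|\phi_k\rangle_{AB}$ be the post-measurement pure state of $AB$, and let $P_E(\phi_k)$ be twice the smallest eigenvalue of its reduced density operator on $A$ (the optimal two-party LOCC probability of converting $|\phi_k\rangle$ into a maximally entangled state). Then $$\sum_k p_k P_E(\phi_k)=2\sin^2\theta$$ (i.e. the measurement, followed by optimal LOCC between Alice and Bob, achieves the optimal entanglement concentration rate $\min\{2\sin^2\theta,2\sin^2\eta\}=2\sin^2\theta$) if and only if $$\sum_{k=1}^4\sqrt{\big(\mathrm{tr}((T_1\otimes T_2)P_k)\big)^2+\sin^2 2\theta\,\big|\mathrm{tr}((|0\rangle\langle1|\otimes T_2)P_k)\big|^2}=\cos2\theta,$$ where $T_1=\cos^2\theta|0\rangle\langle0|-\sin^2\theta|1\rangle\langle1|$ and $T_2=\cos^2\eta|0\rangle\langle0|+\sin^2\eta|1\rangle\langle1|$, with the first tensor factor acting on $C_1$ and the second on $C_2$.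
   Context: For $\lambda\in[0,\tfrac{\pi}{2}]$, $|\Phi_\lambda\rangle=\cos\lambda|00\rangle+\sin\lambda|11\rangle$. Alice holds qubit $A$, Clare holds $C_1$ (initially entangled with $A$) and $C_2$ (initially entangled with $B$), Bob holds $B$. The post-measurement state for outcome $k$ is $|\phi_k\rangle_{AB}=p_k^{-1/2}(\langle\varphi_k|_{C_1C_2}\otimes I_{AB})|\Phi_\theta\rangle_{AC_1}|\Phi_\eta\rangle_{C_2B}$ with $p_k$ the squared norm of the unnormalized vector. *)

(* real numbers with sin/cos/sqrt; complex numbers are
   represented concretely as pairs of reals. Qubit indices are bool
   (false = |0>, true = |1>). *)
From Stdlib Require Import Reals.
Open Scope R_scope.

Record C := mkC { Cre : R ; Cim : R }.
Definition RtoC (x : R) : C := mkC x 0.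
Definition C0 : C := RtoC 0.
Definition C1 : C := RtoC 1.
Definition Cadd (z w : C) : C := mkC (Cre z + Cre w) (Cim z + Cim w).
Definition Cmul (z w : C) : C :=
  mkC (Cre z * Cre w - Cim z * Cim w) (Cre z * Cim w + Cim z * Cre w).
Definition Cconj (z : C) : C := mkC (Cre z) (- Cim z).
Definition Cscale (r : R) (z : C) : C := mkC (r * Cre z) (r * Cim z).
Definition Cnorm2 (z : C) : R := Cre z * Cre z + Cim z * Cim z.

Definition sumbC (f : bool -> C) : C := Cadd (f false) (f true).
Definition sumbR (f : bool -> R) : R := f false + f true.

(* vectors in C^2 (x) C^2, indexed by (c1, c2) *)
Definition Vec4 := bool -> bool -> C.
Definition Mat2 := bool -> bool -> C.
Definition Mat4 := (bool * bool) -> (bool * bool) -> C.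

Definition kron (X Y : Mat2) : Mat4 :=
  fun i j => Cmul (X (fst i) (fst j)) (Y (snd i) (snd j)).

Definition proj (v : Vec4) : Mat4 :=
  fun i j => Cmul (v (fst i) (snd i)) (Cconj (v (fst j) (snd j))).

Definition sum4 (f : bool * bool -> C) : C :=
  sumbC (fun a => sumbC (fun b => f (a, b))).

Definition mmul4 (X Y : Mat4) : Mat4 :=
  fun i j => sum4 (fun l => Cmul (X i l) (Y l j)).

Definition trace4 (X : Mat4) : C := sum4 (fun i => X i i).

Definition inner4 (v w : Vec4) : C :=
  sumbC (fun a => sumbC (fun b => Cmul (Cconj (v a b)) (w a b))).

(* {phi k}_{k=0..3} is an orthonormal basis of C^2 (x) C^2, i.e. the
   projectors P_k = |phi k><phi k| form a projective measurement with
   rank-one projectors (four orthonormal vectors in C^4 automatically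
   resolve the identity). Outcomes are indexed 0..3 (paper: 1..4). *)
Definition orthonormal4 (phi : nat -> Vec4) : Prop :=
  forall k l : nat, (k < 4)%nat -> (l < 4)%nat ->
    inner4 (phi k) (phi l) = if Nat.eqb k l then C1 else C0.

Definition Phi (lam : R) (x y : bool) : C :=
  if Bool.eqb x y then RtoC (if x then sin lam else cos lam) else C0.

(* unnormalized post-measurement vector on AB for outcome phi_k:
   (<phi_k|_{C1C2} (x) I_{AB}) |Phi_theta>_{AC1} |Phi_eta>_{C2B} *)
Definition post_unnorm (theta eta : R) (v : Vec4) (a b : bool) : C :=
  sumbC (fun c1 => sumbC (fun c2 =>
    Cmul (Cconj (v c1 c2)) (Cmul (Phi theta a c1) (Phi eta c2 b)))).

Definition prob (theta eta : R) (v : Vec4) : R :=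
  sumbR (fun a => sumbR (fun b => Cnorm2 (post_unnorm theta eta v a b))).

Definition post_state (theta eta : R) (v : Vec4) (a b : bool) : C :=
  Cscale (/ sqrt (prob theta eta v)) (post_unnorm theta eta v a b).

Definition rhoA (psi : bool -> bool -> C) : Mat2 :=
  fun a a' => sumbC (fun b => Cmul (psi a b) (Cconj (psi a' b))).

(* eigenvalues of a 2x2 matrix X are the roots of its characteristic
   polynomial t^2 - tr(X) t + det(X); for Hermitian X these are real and
   the smallest one is (tr - sqrt(tr^2 - 4 det))/2. *)
Definition trace2 (X : Mat2) : C := Cadd (X false false) (X true true).
Definition det2 (X : Mat2) : C :=
  Cadd (Cmul (X false false) (X true true))
       (Cscale (-1) (Cmul (X false true) (X true false))).
Definition lambda_min2 (X : Mat2) : R :=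
  (Cre (trace2 X) - sqrt (Cre (trace2 X) ^ 2 - 4 * Cre (det2 X))) / 2.

Definition P_E (psi : bool -> bool -> C) : R := 2 * lambda_min2 (rhoA psi).

Definition avg_PE (theta eta : R) (phi : nat -> Vec4) : R :=
  sum_f_R0 (fun k =>
    let p := prob theta eta (phi k) in
    if Rlt_dec 0 p then p * P_E (post_state theta eta (phi k)) else 0) 3.

Definition diag2 (x y : R) : Mat2 :=
  fun i j => if Bool.eqb i j then RtoC (if i then y else x) else C0.
Definition T1 (theta : R) : Mat2 := diag2 (cos theta ^ 2) (- sin theta ^ 2).
Definition T2 (eta : R) : Mat2 := diag2 (cos eta ^ 2) (sin eta ^ 2).
Definition ket0bra1 : Mat2 :=
  fun i j => if (negb i && j)%bool then C1 else C0.

Definition criterion_sum (theta eta : R) (phi : nat -> Vec4) : R :=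
  sum_f_R0 (fun k =>
    sqrt (Cre (trace4 (mmul4 (kron (T1 theta) (T2 eta)) (proj (phi k)))) ^ 2
          + sin (2 * theta) ^ 2
            * Cnorm2 (trace4 (mmul4 (kron ket0bra1 (T2 eta)) (proj (phi k))))))
    3.

From Pilot Require Import Defs.
From Stdlib Require Import Reals Lra.
From mathcomp Require Import all_boot all_algebra complex Rstruct.
Import GRing.Theory.

(* For a pure state psi on AB with reduced state rho_A = rhoA psi and
   p = tr rho_A, the normalized state has smallest reduced eigenvalue
   (p - sqrt D) / (2 p), with D = (tr rho_A)^2 - 4 det rho_A.  Hence
   p_k P_E(phi_k) = p_k - sqrt D_k, and a direct computation shows that the
   k-th summand of the criterion is exactly sqrt D_k for the unnormalized
   post-measurement vector.  Since the P_k resolve the identity, the p_k sum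
   to 1, so the average of P_E is 1 - criterion_sum for every theta, eta, and
   the equivalence follows from cos 2 theta = 1 - 2 sin^2 theta. *)

Open Scope R_scope.

Lemma Cnorm2_ge0 (z : Defs.C) : 0 <= Cnorm2 z.
Proof. exact: Rplus_le_le_0_compat (Rle_0_sqr _) (Rle_0_sqr _). Qed.

Definition rhoA_disc (psi : bool -> bool -> Defs.C) : R :=
  Cre (trace2 (rhoA psi)) ^ 2 - 4 * Cre (det2 (rhoA psi)).

Lemma rhoA_disc_ge0 (psi : bool -> bool -> Defs.C) : 0 <= rhoA_disc psi.
Proof.
have -> : rhoA_disc psi =
    (Cre (rhoA psi false false) - Cre (rhoA psi true true)) ^ 2
    + 4 * Cnorm2 (rhoA psi false true).
  by rewrite /rhoA_disc /trace2 /det2 /rhoA /sumbC /Cnorm2 /=; ring.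
apply: Rplus_le_le_0_compat; first exact: pow2_ge_0.
by apply: Rmult_le_pos; [lra | exact: Cnorm2_ge0].
Qed.

Lemma det2_rhoA_ge0 (psi : bool -> bool -> Defs.C) : 0 <= Cre (det2 (rhoA psi)).
Proof.
have -> : Cre (det2 (rhoA psi)) =
    Cnorm2 (Cadd (Cmul (psi false false) (psi true true))
                 (Cscale (-1) (Cmul (psi false true) (psi true false)))).
  by rewrite /det2 /rhoA /sumbC /Cnorm2 /=; ring.
exact: Cnorm2_ge0.
Qed.

Lemma trace2_rhoA_scale (s : R) (psi : bool -> bool -> Defs.C) :
  Cre (trace2 (rhoA (fun a b => Cscale s (psi a b)))) = s ^ 2 * Cre (trace2 (rhoA psi)).
Proof. rewrite /trace2 /rhoA /sumbC /=; ring. Qed.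

Lemma det2_rhoA_scale (s : R) (psi : bool -> bool -> Defs.C) :
  Cre (det2 (rhoA (fun a b => Cscale s (psi a b)))) = s ^ 4 * Cre (det2 (rhoA psi)).
Proof. rewrite /det2 /rhoA /sumbC /=; ring. Qed.

Lemma P_E_normalized (psi : bool -> bool -> Defs.C) :
  let p := Cre (trace2 (rhoA psi)) in
  0 < p -> p * P_E (fun a b => Cscale (/ sqrt p) (psi a b)) = p - sqrt (rhoA_disc psi).
Proof.
move=> p p_gt0.
have sq : (/ sqrt p) ^ 2 = / p by rewrite pow_inv -Rsqr_pow2 Rsqr_sqrt; lra.
rewrite /P_E /lambda_min2 trace2_rhoA_scale det2_rhoA_scale -/p.
have -> : (/ sqrt p) ^ 4 = (/ p) ^ 2 by rewrite -sq; ring.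
rewrite sq.
have -> : (/ p * p) ^ 2 - 4 * ((/ p) ^ 2 * Cre (det2 (rhoA psi)))
        = (/ p) ^ 2 * rhoA_disc psi by rewrite /rhoA_disc -/p; field; lra.
rewrite sqrt_mult_alt; last exact: pow2_ge_0.
rewrite sqrt_pow2; last exact/Rlt_le/Rinv_0_lt_compat.
by field; lra.
Qed.

Lemma prob_eq_trace2_rhoA theta eta v :
  prob theta eta v = Cre (trace2 (rhoA (post_unnorm theta eta v))).
Proof. rewrite /prob /trace2 /rhoA /sumbR /sumbC /Cnorm2 /=; ring. Qed.

Lemma prob_ge0 theta eta v : 0 <= prob theta eta v.
Proof. by do 2 apply: Rplus_le_le_0_compat; exact: Cnorm2_ge0. Qed.

Lemma avg_PE_eq_sum theta eta (phi : nat -> Vec4) :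
  avg_PE theta eta phi = sum_f_R0 (fun k =>
    prob theta eta (phi k) - sqrt (rhoA_disc (post_unnorm theta eta (phi k)))) 3.
Proof.
rewrite /avg_PE; apply: PartSum.sum_eq => k _ /=.
rewrite /post_state prob_eq_trace2_rhoA.
case: Rlt_dec => [p_gt0 | p_le0]; first exact: P_E_normalized.
have p0 : Cre (trace2 (rhoA (post_unnorm theta eta (phi k)))) = 0.
  by have := prob_ge0 theta eta (phi k); rewrite prob_eq_trace2_rhoA; lra.
have disc0 : rhoA_disc (post_unnorm theta eta (phi k)) = 0.
  have := rhoA_disc_ge0 (post_unnorm theta eta (phi k)).
  have := det2_rhoA_ge0 (post_unnorm theta eta (phi k)).
  rewrite /rhoA_disc p0; lra.
by rewrite p0 disc0 sqrt_0; lra.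
Qed.

Lemma criterion_summand_eq_disc theta eta v :
  Cre (trace4 (mmul4 (kron (T1 theta) (T2 eta)) (proj v))) ^ 2
  + sin (2 * theta) ^ 2 * Cnorm2 (trace4 (mmul4 (kron ket0bra1 (T2 eta)) (proj v)))
  = rhoA_disc (post_unnorm theta eta v).
Proof.
rewrite sin_2a /rhoA_disc /trace4 /mmul4 /kron /T1 /T2 /ket0bra1 /proj /diag2
  /sum4 /sumbC /trace2 /det2 /rhoA /post_unnorm /Phi /Cnorm2 /=.
ring.
Qed.

Lemma criterion_sum_eq_sum theta eta (phi : nat -> Vec4) :
  criterion_sum theta eta phi
  = sum_f_R0 (fun k => sqrt (rhoA_disc (post_unnorm theta eta (phi k)))) 3.
Proof. by apply: PartSum.sum_eq => k _; rewrite criterion_summand_eq_disc. Qed.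

Lemma prob_expand theta eta v : prob theta eta v =
  cos theta ^ 2 * cos eta ^ 2 * Cnorm2 (v false false)
  + cos theta ^ 2 * sin eta ^ 2 * Cnorm2 (v false true)
  + sin theta ^ 2 * cos eta ^ 2 * Cnorm2 (v true false)
  + sin theta ^ 2 * sin eta ^ 2 * Cnorm2 (v true true).
Proof. rewrite /prob /sumbR /post_unnorm /sumbC /Phi /Cnorm2 /=; ring. Qed.

Lemma sum_prob_eq1 theta eta (phi : nat -> Vec4) :
  (forall a b, sum_f_R0 (fun k => Cnorm2 (phi k a b)) 3 = 1) ->
  sum_f_R0 (fun k => prob theta eta (phi k)) 3 = 1.
Proof.
move=> col.
have pt : cos theta ^ 2 + sin theta ^ 2 = 1 by rewrite -!Rsqr_pow2 Rplus_comm sin2_cos2.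
have pe : cos eta ^ 2 + sin eta ^ 2 = 1 by rewrite -!Rsqr_pow2 Rplus_comm sin2_cos2.
pose S a b := sum_f_R0 (fun k => Cnorm2 (phi k a b)) 3.
transitivity (cos theta ^ 2 * cos eta ^ 2 * S false false
  + cos theta ^ 2 * sin eta ^ 2 * S false true
  + sin theta ^ 2 * cos eta ^ 2 * S true false
  + sin theta ^ 2 * sin eta ^ 2 * S true true).
  by rewrite /S /= !prob_expand; ring.
rewrite /S !col; transitivity ((cos theta ^ 2 + sin theta ^ 2) * (cos eta ^ 2 + sin eta ^ 2)).
  by ring.
by rewrite pt pe Rmult_1_r.
Qed.

Section ColumnNorms.
Local Open Scope ring_scope.

Lemma unitary_column_norm (n : nat) (M : 'M[R[i]]_n) (j : 'I_n) :
  M *m \matrix_(k, l) (M l k)^* = 1%:M -> \sum_k (M k j)^* * M k j = 1.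
Proof.
move=> /mulmx1C /matrixP /(_ j j); rewrite !mxE eqxx mulr1n => <-.
by apply: eq_bigr => k _; rewrite mxE.
Qed.

Definition toC (z : Defs.C) : R[i] := Complex (Cre z) (Cim z).

Lemma toC_add z w : toC (Cadd z w) = toC z + toC w.
Proof. by case: z; case: w. Qed.

Lemma toC_mul z w : toC (Cmul z w) = toC z * toC w.
Proof. by case: z; case: w. Qed.

Lemma toC_conj z : toC (Cconj z) = (toC z)^*.
Proof. by case: z. Qed.

Definition qubit_pair (i : 'I_4) : bool * bool := ((2 <= i)%N, odd i).

Definition basis_mx (phi : nat -> Vec4) : 'M[R[i]]_4 :=
  \matrix_(k, i) toC (phi k (qubit_pair i).1 (qubit_pair i).2).

Lemma basis_mx_unitary (phi : nat -> Vec4) : orthonormal4 phi ->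
  basis_mx phi *m \matrix_(k, l) (basis_mx phi l k)^* = 1%:M.
Proof.
move=> on; apply/matrixP => k l; rewrite !mxE.
have -> : \sum_i basis_mx phi k i * (\matrix_(k, l) (basis_mx phi l k)^*) i l
          = toC (inner4 (phi l) (phi k)).
  rewrite /inner4 /sumbC !toC_add !toC_mul !toC_conj.
  rewrite !big_ord_recl big_ord0 !mxE addr0 !addrA /=.
  by congr (_ + _ + _ + _); apply: mulrC.
rewrite on; try exact/ltP.
case: (eqVneq k l) => [-> | neq]; first by rewrite PeanoNat.Nat.eqb_refl.
have /PeanoNat.Nat.eqb_neq -> : nat_of_ord l <> nat_of_ord k.
  by move=> /val_inj eq_lk; rewrite eq_lk eqxx in neq.
by [].
Qed.

Lemma basis_mx_column_norm (phi : nat -> Vec4) (j : 'I_4) : orthonormal4 phi ->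
  (sum_f_R0 (fun k => Cnorm2 (phi k (qubit_pair j).1 (qubit_pair j).2)) 3 = 1)%R.
Proof.
move=> /basis_mx_unitary /(unitary_column_norm _ _ j) /(congr1 (@Re _)).
rewrite !big_ord_recl big_ord0 !mxE /= => <-.
by rewrite /Cnorm2 /bump /= !addn0 !add1n addr0 -!RminusE -!RplusE -!RmultE -!RoppE; ring.
Qed.

Lemma orthonormal4_sum_Cnorm2 (phi : nat -> Vec4) : orthonormal4 phi ->
  forall a b, (sum_f_R0 (fun k => Cnorm2 (phi k a b)) 3 = 1)%R.
Proof.
move=> on a b; have lt4 : (2 * a + b < 4)%N by case: a; case: b.
by move: (basis_mx_column_norm phi (Ordinal lt4) on); case: a b lt4 => [] [].
Qed.
End ColumnNorms.

Lemma avg_PE_eq_1_sub_criterion_sum theta eta (phi : nat -> Vec4) :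
  orthonormal4 phi -> avg_PE theta eta phi = 1 - criterion_sum theta eta phi.
Proof.
move=> on; rewrite avg_PE_eq_sum criterion_sum_eq_sum minus_sum.
by rewrite (sum_prob_eq1 _ _ _ (orthonormal4_sum_Cnorm2 phi on)).
Qed.

Theorem theorem2 (theta eta : R) (phi : nat -> Vec4) :
  0 < theta -> theta <= eta -> eta <= PI / 4 ->
  orthonormal4 phi ->
  (avg_PE theta eta phi = 2 * sin theta ^ 2 <->
   criterion_sum theta eta phi = cos (2 * theta)).
Proof.
move=> _ _ _ on; rewrite avg_PE_eq_1_sub_criterion_sum // cos_2a_sin; lra.
Qed.
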